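(* Let $N\cong\mathbb{Z}^3$, let $L\subset N_\mathbb{R}$ be a two-dimensional linear subspace, and let $T\subset L$ be a triangle with vertices in $N\cap L$ which is equivalent (under an isomorphism of lattices $\mathbb{Z}^2\to N\cap L$) to $\mathrm{conv}\{(1,0),(0,1),(-2,-1)\}$. Let $x\in N\setminus L$. Let $P$ be a minimal Fano polytope containing $T$ and the points $x$ and $-x$. Then, up to the action of $GL(3,\mathbb{Z})$, $P$ is the convex hull of the columns of one of $$\begin{pmatrix}1&0&0&0&-2\\0&1&0&0&-1\\0&0&1&-1&0\end{pmatrix}\quad\text{or}\quad\begin{pmatrix}1&0&-2&1&-1\\0&1&-1&1&-1\\0&0&0&2&-2\end{pmatrix}.$$
   Context: A Fano polytope is a three-dimensional convex polytope $P\subset N_\mathbb{R}$ with vertices in $N$ such that the origin is the only lattice point in the interior of $P$. It is minimal if, for every vertex $\rho$ of $P$, the polytope $\mathrm{conv}((P\cap N)\setminus\{\rho\})$ is not a Fano polytope. Polytopes are identified up to $GL(3,\mathbb{Z})$ (after choosing a basis of $N$). *)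

From Stdlib Require Import Reals ZArith List.
Open Scope R_scope.

(* Points of N_R = R^3 and of the lattice N = Z^3 (standard basis). *)
Record vec3 := V3 { c1 : R; c2 : R; c3 : R }.
Record pt := P3 { z1 : Z; z2 : Z; z3 : Z }.

Definition emb (p : pt) : vec3 := V3 (IZR (z1 p)) (IZR (z2 p)) (IZR (z3 p)).

Definition vadd (p q : vec3) : vec3 := V3 (c1 p + c1 q) (c2 p + c2 q) (c3 p + c3 q).
Definition vscale (a : R) (p : vec3) : vec3 := V3 (a * c1 p) (a * c2 p) (a * c3 p).
Definition vzero : vec3 := V3 0 0 0.

Definition zadd (p q : pt) : pt := P3 (z1 p + z1 q) (z2 p + z2 q) (z3 p + z3 q).
Definition zscale (a : Z) (p : pt) : pt := P3 (a * z1 p) (a * z2 p) (a * z3 p).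
Definition zopp (p : pt) : pt := zscale (-1)%Z p.

Definition region := vec3 -> Prop.
Definition same_set (A B : region) : Prop := forall p, A p <-> B p.
Definition subset (A B : region) : Prop := forall p, A p -> B p.

Definition latt (p : vec3) : Prop := exists z : pt, emb z = p.

Definition wsum (l : list (R * vec3)) : R := fold_right (fun wq acc => fst wq + acc) 0 l.
Definition csum (l : list (R * vec3)) : vec3 :=
  fold_right (fun wq acc => vadd (vscale (fst wq) (snd wq)) acc) vzero l.
Definition conv (S : region) : region := fun p =>
  exists l : list (R * vec3),
    Forall (fun wq => 0 <= fst wq /\ S (snd wq)) l /\ wsum l = 1 /\ csum l = p.

Definition ptset (V : list pt) : region := fun q => exists z, In z V /\ q = emb z.

Definition interior (P : region) (p : vec3) : Prop :=
  exists e, 0 < e /\ forall q,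
    Rabs (c1 q - c1 p) < e -> Rabs (c2 q - c2 p) < e -> Rabs (c3 q - c3 p) < e -> P q.

Definition lattice_polytope (P : region) : Prop :=
  exists V : list pt, same_set P (conv (ptset V)).

Definition vertex (P : region) (r : vec3) : Prop :=
  P r /\ forall a b t, P a -> P b -> 0 < t < 1 ->
    r = vadd (vscale t a) (vscale (1 - t) b) -> a = r /\ b = r.

Definition fano (P : region) : Prop :=
  lattice_polytope P /\
  (exists p, interior P p) /\              (* three-dimensional *)
  interior P vzero /\
  (forall p, latt p -> interior P p -> p = vzero).

Definition minimal_fano (P : region) : Prop :=
  fano P /\
  forall r, vertex P r -> ~ fano (conv (fun q => P q /\ latt q /\ q <> r)).

Record zmat := ZM { m11 : Z; m12 : Z; m13 : Z;
                    m21 : Z; m22 : Z; m23 : Z;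
                    m31 : Z; m32 : Z; m33 : Z }.
Definition zdet (A : zmat) : Z :=
  (m11 A * (m22 A * m33 A - m23 A * m32 A)
   - m12 A * (m21 A * m33 A - m23 A * m31 A)
   + m13 A * (m21 A * m32 A - m22 A * m31 A))%Z.
Definition in_GL3Z (A : zmat) : Prop := zdet A = 1%Z \/ zdet A = (-1)%Z.
Definition zapply (A : zmat) (p : pt) : pt :=
  P3 (m11 A * z1 p + m12 A * z2 p + m13 A * z3 p)
     (m21 A * z1 p + m22 A * z2 p + m23 A * z3 p)
     (m31 A * z1 p + m32 A * z2 p + m33 A * z3 p).

Definition inspan (u v p : vec3) : Prop :=
  exists a b : R, p = vadd (vscale a u) (vscale b v).
Definition lin_indep2 (u v : vec3) : Prop :=
  forall a b : R, vadd (vscale a u) (vscale b v) = vzero -> a = 0 /\ b = 0.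

(* (u, v) is a Z-basis of the lattice N ∩ L, where L = span_R(u, v) is
   two-dimensional; equivalently (1,0) |-> u, (0,1) |-> v is a lattice
   isomorphism Z^2 -> N ∩ L. *)
Definition basis_of_sublattice (u v : pt) : Prop :=
  lin_indep2 (emb u) (emb v) /\
  forall z : pt, inspan (emb u) (emb v) (emb z) ->
    exists m n : Z, z = zadd (zscale m u) (zscale n v).

Definition cols1 : list pt :=
  P3 1 0 0 :: P3 0 1 0 :: P3 0 0 1 :: P3 0 0 (-1) :: P3 (-2) (-1) 0 :: nil.
Definition cols2 : list pt :=
  P3 1 0 0 :: P3 0 1 0 :: P3 (-2) (-1) 0 :: P3 1 1 2 :: P3 (-1) (-1) (-2) :: nil.

From Stdlib Require Import Reals ZArith List Lra Lia Classical Znumtheory.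
Open Scope R_scope.

(* Let [h = det(u, v, .)] be the height over the plane [L].  Since [(u, v)] is a basis of
   [N ∩ L], it extends by some [z] with [h(z) = 1] to a basis of [N]; replacing [x] by [-x]
   and [z] by [z + (lattice point of L)], [x = a u + b v + D z] with [D = h(x) > 0] and
   [0 <= a, b < D].  The hull of [u, v, w = -2u - v] and any two lattice points of opposite
   heights has the origin in its interior: [2u + v + w = 0] combines with them to a positive
   relation involving three independent vectors.  So removing any vertex of [P] other than
   [u, v, w, x, -x] leaves a Fano polytope; by minimality [P = conv(u, v, w, x, -x)], and [x],
   [-x] are vertices (extremal height).  For the same reason a lattice point of [P] of height
   strictly between [0] and [+-D] would allow removing [x] or [-x].  Explicit lattice points
   of [P] of height [+-1] or [2] exclude every case except [D = 1] and [(D, a, b) = (2, 1, 1)],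
   which are the two matrices. *)

(** * Convex hulls *)

Lemma vec3_ext (p q : vec3) : c1 p = c1 q -> c2 p = c2 q -> c3 p = c3 q -> p = q.
Proof. destruct p, q; simpl; intros; subst; reflexivity. Qed.

Ltac veq := apply vec3_ext; simpl.

Ltac weights_ok :=
  repeat (apply Forall_cons; [split; simpl; auto; try lra |]); apply Forall_nil.

Definition wscale (a : R) (l : list (R * vec3)) : list (R * vec3) :=
  map (fun wq => (a * fst wq, snd wq)) l.

Lemma wsum_app l1 l2 : wsum (l1 ++ l2) = wsum l1 + wsum l2.
Proof. induction l1; simpl; [ring | rewrite IHl1; ring]. Qed.

Lemma csum_app l1 l2 : csum (l1 ++ l2) = vadd (csum l1) (csum l2).
Proof. induction l1; simpl; [veq; ring | rewrite IHl1; veq; ring]. Qed.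

Lemma wsum_wscale a l : wsum (wscale a l) = a * wsum l.
Proof. induction l; simpl; [ring | rewrite IHl; ring]. Qed.

Lemma csum_wscale a l : csum (wscale a l) = vscale a (csum l).
Proof. induction l; simpl; [veq; ring | rewrite IHl; veq; ring]. Qed.

Lemma conv_idem (S : region) p : conv (conv S) p -> conv S p.
Proof.
  intros [l [Hl [Hw Hc]]]. subst p.
  enough (exists l', Forall (fun wq => 0 <= fst wq /\ S (snd wq)) l' /\
            wsum l' = wsum l /\ csum l' = csum l) as [l' [H1 [H2 H3]]]
    by (exists l'; repeat split; congruence).
  clear Hw. induction l as [|[w s] l IH].
  { exists nil; simpl; auto. }
  inversion Hl as [|? ? [Hw [ls [Hls [Hws Hcs]]]] Hl']; subst; simpl in Hw.
  destruct (IH Hl') as [l' [H1 [H2 H3]]].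
  exists (wscale w ls ++ l'). simpl. repeat split.
  - apply Forall_app; split; auto. apply Forall_map.
    eapply Forall_impl; [|exact Hls]. intros [a b] [Ha Hb]; simpl. split; auto.
    apply Rmult_le_pos; auto.
  - rewrite wsum_app, wsum_wscale, Hws, H2; ring.
  - rewrite csum_app, csum_wscale, Hcs, H3; reflexivity.
Qed.

Lemma conv_mono (S T : region) : subset S T -> subset (conv S) (conv T).
Proof.
  intros HST p [l [Hl H]]. exists l. split; auto.
  eapply Forall_impl; [|exact Hl]. intros wq []; auto.
Qed.

Lemma conv_ext (S T : region) : same_set S T -> same_set (conv S) (conv T).
Proof. intros H p; split; apply conv_mono; intros q; apply H. Qed.

Lemma subset_conv (S : region) : subset S (conv S).
Proof.
  intros p Hp. exists ((1, p) :: nil). simpl.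
  repeat split; [weights_ok | ring | veq; ring].
Qed.

Lemma conv_min (S T : region) :
  subset S (conv T) -> subset (conv S) (conv T).
Proof. intros H p Hp. apply conv_idem. revert Hp. apply conv_mono, H. Qed.

Lemma conv_segment (S : region) a b t : conv S a -> conv S b -> 0 <= t <= 1 ->
  conv S (vadd (vscale t a) (vscale (1 - t) b)).
Proof.
  intros Ha Hb Ht. apply conv_idem. exists ((t, a) :: (1 - t, b) :: nil). simpl.
  repeat split; [weights_ok | ring | veq; ring].
Qed.

Lemma conv_comb5 (S : region) p1 p2 p3 p4 p5 a1 a2 a3 a4 a5 q :
  S p1 -> S p2 -> S p3 -> S p4 -> S p5 ->
  0 <= a1 -> 0 <= a2 -> 0 <= a3 -> 0 <= a4 -> 0 <= a5 -> a1 + a2 + a3 + a4 + a5 = 1 ->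
  c1 q = a1 * c1 p1 + a2 * c1 p2 + a3 * c1 p3 + a4 * c1 p4 + a5 * c1 p5 ->
  c2 q = a1 * c2 p1 + a2 * c2 p2 + a3 * c2 p3 + a4 * c2 p4 + a5 * c2 p5 ->
  c3 q = a1 * c3 p1 + a2 * c3 p2 + a3 * c3 p3 + a4 * c3 p4 + a5 * c3 p5 ->
  conv S q.
Proof.
  intros. exists ((a1, p1) :: (a2, p2) :: (a3, p3) :: (a4, p4) :: (a5, p5) :: nil). simpl.
  repeat split; [weights_ok | lra | veq; lra].
Qed.

(** * Interior points *)

Definition rdet3 (p q r : vec3) : R :=
  c1 p * (c2 q * c3 r - c3 q * c2 r) - c2 p * (c1 q * c3 r - c3 q * c1 r)
  + c3 p * (c1 q * c2 r - c2 q * c1 r).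

Lemma rdet3_rot p q r : rdet3 p q r = rdet3 r p q.
Proof. unfold rdet3; ring. Qed.

Lemma cramer p1 p2 p3 q : rdet3 p1 p2 p3 <> 0 ->
  q = vadd (vscale (rdet3 q p2 p3 / rdet3 p1 p2 p3) p1)
        (vadd (vscale (rdet3 p1 q p3 / rdet3 p1 p2 p3) p2)
              (vscale (rdet3 p1 p2 q / rdet3 p1 p2 p3) p3)).
Proof. intros HD. veq; field_simplify_eq; auto; unfold rdet3; ring. Qed.

Lemma linear_form_small (k1 k2 k3 d : R) : 0 < d -> exists e, 0 < e /\ forall q,
  Rabs (c1 q) < e -> Rabs (c2 q) < e -> Rabs (c3 q) < e ->
  Rabs (k1 * c1 q + k2 * c2 q + k3 * c3 q) <= d.
Proof.
  intros Hd. set (K := 1 + Rabs k1 + Rabs k2 + Rabs k3).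
  pose proof (Rabs_pos k1) as P1; pose proof (Rabs_pos k2) as P2; pose proof (Rabs_pos k3) as P3.
  assert (HK : 0 < K) by (unfold K; lra).
  exists (d / K). split; [apply Rdiv_lt_0_compat; auto |]. intros q H1 H2 H3.
  assert (HKe : K * (d / K) = d) by (field; lra).
  assert (Hk : forall k r, Rabs r < d / K -> Rabs (k * r) <= Rabs k * (d / K)).
  { intros k r Hr. rewrite Rabs_mult. apply Rmult_le_compat_l; [apply Rabs_pos | lra]. }
  pose proof (Hk k1 _ H1); pose proof (Hk k2 _ H2); pose proof (Hk k3 _ H3).
  pose proof (Rabs_triang (k1 * c1 q + k2 * c2 q) (k3 * c3 q)).
  pose proof (Rabs_triang (k1 * c1 q) (k2 * c2 q)).
  assert (Rabs k1 * (d / K) + Rabs k2 * (d / K) + Rabs k3 * (d / K) <= K * (d / K)).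
  { assert (0 < d / K) by (apply Rdiv_lt_0_compat; auto).
    replace (K * (d / K)) with (Rabs k1 * (d / K) + Rabs k2 * (d / K) + Rabs k3 * (d / K) + d / K)
      by (unfold K; ring).
    lra. }
  lra.
Qed.

Lemma rdet3_small p2 p3 d : 0 < d -> exists e, 0 < e /\ forall q,
  Rabs (c1 q) < e -> Rabs (c2 q) < e -> Rabs (c3 q) < e -> Rabs (rdet3 q p2 p3) <= d.
Proof.
  intros Hd.
  destruct (linear_form_small (c2 p2 * c3 p3 - c3 p2 * c2 p3)
              (c3 p2 * c1 p3 - c1 p2 * c3 p3) (c1 p2 * c2 p3 - c2 p2 * c1 p3) d Hd)
    as [e [He H]].
  exists e. split; auto. intros q H1 H2 H3.
  replace (rdet3 q p2 p3) with ((c2 p2 * c3 p3 - c3 p2 * c2 p3) * c1 q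
    + (c3 p2 * c1 p3 - c1 p2 * c3 p3) * c2 q + (c1 p2 * c2 p3 - c2 p2 * c1 p3) * c3 q)
    by (unfold rdet3; ring).
  auto.
Qed.

Lemma cramer_coords_small p1 p2 p3 d : rdet3 p1 p2 p3 <> 0 -> 0 < d ->
  exists e, 0 < e /\ forall q,
    Rabs (c1 q) < e -> Rabs (c2 q) < e -> Rabs (c3 q) < e ->
    Rabs (rdet3 q p2 p3 / rdet3 p1 p2 p3) <= d /\
    Rabs (rdet3 p1 q p3 / rdet3 p1 p2 p3) <= d /\
    Rabs (rdet3 p1 p2 q / rdet3 p1 p2 p3) <= d.
Proof.
  intros HD Hd. set (D := rdet3 p1 p2 p3) in *.
  assert (HDp : 0 < Rabs D) by (apply Rabs_pos_lt; auto).
  assert (Hdd : 0 < d * Rabs D) by (apply Rmult_lt_0_compat; auto).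
  destruct (rdet3_small p2 p3 _ Hdd) as [e1 [He1 H1]].
  destruct (rdet3_small p3 p1 _ Hdd) as [e2 [He2 H2]].
  destruct (rdet3_small p1 p2 _ Hdd) as [e3 [He3 H3]].
  exists (Rmin e1 (Rmin e2 e3)). split.
  { repeat apply Rmin_glb_lt; auto. }
  intros q Q1 Q2 Q3.
  assert (Hmin : forall a, Rabs a < Rmin e1 (Rmin e2 e3) ->
    Rabs a < e1 /\ Rabs a < e2 /\ Rabs a < e3).
  { intros a Ha. pose proof (Rmin_l e1 (Rmin e2 e3)). pose proof (Rmin_r e1 (Rmin e2 e3)).
    pose proof (Rmin_l e2 e3). pose proof (Rmin_r e2 e3). lra. }
  apply Hmin in Q1, Q2, Q3.
  assert (Hdiv : forall a, Rabs a <= d * Rabs D -> Rabs (a / D) <= d).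
  { intros a Ha. unfold Rdiv. rewrite Rabs_mult, Rabs_inv.
    apply (Rmult_le_reg_r (Rabs D)); auto. rewrite Rmult_assoc, Rinv_l; lra. }
  rewrite <- (rdet3_rot q p3 p1), (rdet3_rot p1 p2 q).
  repeat split; apply Hdiv; [apply H1 | apply H2 | apply H3]; tauto.
Qed.

Lemma conv_of_small_coords (S : region) p1 p2 p3 p4 p5 m1 m2 m3 m4 m5 b1 b2 b3 d q :
  S p1 -> S p2 -> S p3 -> S p4 -> S p5 ->
  0 < m1 -> 0 < m2 -> 0 < m3 -> 0 < m4 -> 0 < m5 ->
  m1 * c1 p1 + m2 * c1 p2 + m3 * c1 p3 + m4 * c1 p4 + m5 * c1 p5 = 0 ->
  m1 * c2 p1 + m2 * c2 p2 + m3 * c2 p3 + m4 * c2 p4 + m5 * c2 p5 = 0 ->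
  m1 * c3 p1 + m2 * c3 p2 + m3 * c3 p3 + m4 * c3 p4 + m5 * c3 p5 = 0 ->
  6 * d <= 1 -> 2 * d * (m1 + m2 + m3 + m4 + m5) <= m1 ->
  2 * d * (m1 + m2 + m3 + m4 + m5) <= m2 -> 2 * d * (m1 + m2 + m3 + m4 + m5) <= m3 ->
  Rabs b1 <= d -> Rabs b2 <= d -> Rabs b3 <= d ->
  q = vadd (vscale b1 p1) (vadd (vscale b2 p2) (vscale b3 p3)) -> conv S q.
Proof.
  intros S1 S2 S3 S4 S5 M1 M2 M3 M4 M5 R1 R2 R3 Hd D1 D2 D3 B1 B2 B3 Hq.
  set (M := m1 + m2 + m3 + m4 + m5) in *.
  pose proof (Rle_abs b1); pose proof (Rle_abs b2); pose proof (Rle_abs b3).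
  pose proof (Rle_abs (- b1)); pose proof (Rle_abs (- b2)); pose proof (Rle_abs (- b3)).
  rewrite !Rabs_Ropp in *.
  (* The small coordinates [b] are absorbed by a positive multiple [c] of the relation. *)
  set (c := (1 - (b1 + b2 + b3)) / M).
  assert (HM0 : 0 < M) by (unfold M; lra).
  assert (HdM : 0 <= d * M) by (apply Rmult_le_pos; lra).
  assert (HcM : c * M = 1 - (b1 + b2 + b3)) by (unfold c; field; lra).
  assert (Hc : forall m, 2 * d * M <= m -> d <= c * m).
  { intros m Hm. apply (Rmult_le_reg_r M); auto.
    assert (0 <= (c * M - 1 / 2) * m) by (apply Rmult_le_pos; lra).
    replace (c * m * M) with ((c * M - 1 / 2) * m + m / 2) by field. lra. }
  pose proof (Hc m1 D1); pose proof (Hc m2 D2); pose proof (Hc m3 D3).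
  assert (0 < c) by nra.
  assert (0 < c * m4) by (apply Rmult_lt_0_compat; lra).
  assert (0 < c * m5) by (apply Rmult_lt_0_compat; lra).
  apply (conv_comb5 S p1 p2 p3 p4 p5 (b1 + c * m1) (b2 + c * m2) (b3 + c * m3) (c * m4) (c * m5));
    auto; try lra.
  - replace 1 with (b1 + b2 + b3 + c * M) by lra. unfold M. ring.
  - rewrite Hq; simpl. transitivity (b1 * c1 p1 + b2 * c1 p2 + b3 * c1 p3
      + c * (m1 * c1 p1 + m2 * c1 p2 + m3 * c1 p3 + m4 * c1 p4 + m5 * c1 p5)); [rewrite R1 |]; ring.
  - rewrite Hq; simpl. transitivity (b1 * c2 p1 + b2 * c2 p2 + b3 * c2 p3
      + c * (m1 * c2 p1 + m2 * c2 p2 + m3 * c2 p3 + m4 * c2 p4 + m5 * c2 p5)); [rewrite R2 |]; ring.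
  - rewrite Hq; simpl. transitivity (b1 * c3 p1 + b2 * c3 p2 + b3 * c3 p3
      + c * (m1 * c3 p1 + m2 * c3 p2 + m3 * c3 p3 + m4 * c3 p4 + m5 * c3 p5)); [rewrite R3 |]; ring.
Qed.

Lemma interior_conv_of_positive_relation (S : region) p1 p2 p3 p4 p5 m1 m2 m3 m4 m5 :
  S p1 -> S p2 -> S p3 -> S p4 -> S p5 ->
  0 < m1 -> 0 < m2 -> 0 < m3 -> 0 < m4 -> 0 < m5 ->
  m1 * c1 p1 + m2 * c1 p2 + m3 * c1 p3 + m4 * c1 p4 + m5 * c1 p5 = 0 ->
  m1 * c2 p1 + m2 * c2 p2 + m3 * c2 p3 + m4 * c2 p4 + m5 * c2 p5 = 0 ->
  m1 * c3 p1 + m2 * c3 p2 + m3 * c3 p3 + m4 * c3 p4 + m5 * c3 p5 = 0 ->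
  rdet3 p1 p2 p3 <> 0 -> interior (conv S) vzero.
Proof.
  intros S1 S2 S3 S4 S5 M1 M2 M3 M4 M5 R1 R2 R3 HD.
  set (M := m1 + m2 + m3 + m4 + m5).
  assert (HM : 0 < M) by (unfold M; lra).
  set (mu := Rmin (Rmin m1 m2) (Rmin m3 (M / 3))).
  pose proof (Rmin_l (Rmin m1 m2) (Rmin m3 (M / 3))).
  pose proof (Rmin_r (Rmin m1 m2) (Rmin m3 (M / 3))).
  pose proof (Rmin_l m1 m2); pose proof (Rmin_r m1 m2).
  pose proof (Rmin_l m3 (M / 3)); pose proof (Rmin_r m3 (M / 3)).
  assert (Hmu : 0 < mu) by (repeat apply Rmin_glb_lt; lra).
  assert (Hd : 2 * (mu / (2 * M)) * M = mu) by (field; lra).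
  destruct (cramer_coords_small p1 p2 p3 (mu / (2 * M)) HD) as [e [He Hsmall]].
  { apply Rdiv_lt_0_compat; lra. }
  exists e. split; auto. intros q Q1 Q2 Q3. simpl in Q1, Q2, Q3.
  rewrite !Rminus_0_r in Q1, Q2, Q3.
  destruct (Hsmall q Q1 Q2 Q3) as [B1 [B2 B3]].
  apply (conv_of_small_coords S p1 p2 p3 p4 p5 m1 m2 m3 m4 m5
    (rdet3 q p2 p3 / rdet3 p1 p2 p3) (rdet3 p1 q p3 / rdet3 p1 p2 p3)
    (rdet3 p1 p2 q / rdet3 p1 p2 p3) (mu / (2 * M)) q); fold M; auto; try (unfold mu in *; lra).
  - apply (Rmult_le_reg_r (2 * M)); [lra |]. unfold mu in *. field_simplify; lra.
  - apply cramer, HD.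
Qed.

(** * Vertices *)

Lemma csum_split (S : region) r l :
  Forall (fun wq => 0 <= fst wq /\ S (snd wq)) l ->
  exists al be p, 0 <= al /\ 0 <= be /\ (be = 0 \/ conv (fun q => S q /\ q <> r) p) /\
    al + be = wsum l /\ csum l = vadd (vscale al r) (vscale be p).
Proof.
  induction l as [|[w s] l IH]; intros Hl.
  { exists 0, 0, vzero. simpl. repeat split; auto; try lra. veq; ring. }
  inversion Hl as [|? ? [Hw Hs] Hl']; subst; simpl in Hw, Hs.
  destruct (IH Hl') as [al [be [p [Hal [Hbe [Hp [Hsum Hc]]]]]]].
  simpl. rewrite Hc.
  destruct (classic (s = r)) as [->|Hsr].
  { exists (al + w), be, p. repeat split; auto; try lra. veq; ring. }
  destruct (Req_dec (be + w) 0) as [Z|NZ].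
  { exists al, 0, p. repeat split; auto; try lra.
    assert (be = 0) by lra. assert (w = 0) by lra. subst. veq; ring. }
  assert (Hs' : conv (fun q => S q /\ q <> r) s) by (apply subset_conv; auto).
  exists al, (be + w), (vadd (vscale (be / (be + w)) p) (vscale (1 - be / (be + w)) s)).
  repeat split; auto; try lra.
  - right. destruct Hp as [-> | Hp].
    + replace (0 / (0 + w)) with 0 by (field; lra).
      replace (vadd (vscale 0 p) (vscale (1 - 0) s)) with s by (veq; ring). auto.
    + apply conv_segment; auto. split.
      * apply Rmult_le_pos; [lra | left; apply Rinv_0_lt_compat; lra].
      * apply (Rmult_le_reg_r (be + w)); [lra |]. field_simplify; lra.
  - veq; field; auto.
Qed.

Lemma conv_split (S : region) r p : conv S p ->
  exists be p', 0 <= be <= 1 /\ (be = 0 \/ conv (fun q => S q /\ q <> r) p') /\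
    p = vadd (vscale (1 - be) r) (vscale be p').
Proof.
  intros [l [Hl [Hw Hc]]].
  destruct (csum_split S r l Hl) as [al [be [p' [Hal [Hbe [Hp [Hsum Hcs]]]]]]].
  exists be, p'. repeat split; auto; try lra.
  rewrite <- Hc, Hcs. replace al with (1 - be) by lra. reflexivity.
Qed.

Lemma conv_of_weighted_pair (S : region) r a b la lb :
  0 <= la -> 0 <= lb -> 0 < la + lb -> (la = 0 \/ conv S a) -> (lb = 0 \/ conv S b) ->
  vscale (la + lb) r = vadd (vscale la a) (vscale lb b) -> conv S r.
Proof.
  intros Ha Hb Hab Ca Cb E.
  assert (Hr : r = vadd (vscale (la / (la + lb)) a) (vscale (1 - la / (la + lb)) b)).
  { apply (f_equal (fun p => (c1 p, c2 p, c3 p))) in E. simpl in E. injection E as E1 E2 E3.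
    veq; apply (Rmult_eq_reg_l (la + lb)); try lra;
      [rewrite E1 | rewrite E2 | rewrite E3]; field; lra. }
  destruct Ca as [Ca | Ca], Cb as [Cb | Cb]; try lra.
  - subst la. rewrite Hr. replace (vadd _ _) with b by (veq; field; lra). auto.
  - subst lb. rewrite Hr. replace (vadd _ _) with a by (veq; field; lra). auto.
  - rewrite Hr. apply conv_segment; auto. split.
    + apply Rmult_le_pos; [lra | left; apply Rinv_0_lt_compat; lra].
    + apply (Rmult_le_reg_r (la + lb)); [lra |]. field_simplify; lra.
Qed.

Lemma nonvertex_in_conv_remove (S : region) r :
  conv S r -> ~ vertex (conv S) r -> conv (fun q => S q /\ q <> r) r.
Proof.
  intros Hr Hv.
  assert (Hab : exists a b t, conv S a /\ conv S b /\ 0 < t < 1 /\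
      r = vadd (vscale t a) (vscale (1 - t) b) /\ ~ (a = r /\ b = r)).
  { apply NNPP; intros N. apply Hv. split; auto. intros a b t Ha Hb Ht E.
    apply NNPP; intros X. apply N. exists a, b, t. auto. }
  destruct Hab as [a [b [t [Ha [Hb [Ht [E Hn]]]]]]].
  destruct (conv_split S r a Ha) as [ba [a' [Hba [Ha' Ea]]]].
  destruct (conv_split S r b Hb) as [bb [b' [Hbb [Hb' Eb]]]].
  assert (Hpos : 0 < t * ba + (1 - t) * bb).
  { destruct (Req_dec ba 0) as [Za | Na]; [destruct (Req_dec bb 0) as [Zb | Nb] |].
    - exfalso. apply Hn. subst ba bb.
      split; [rewrite Ea | rewrite Eb]; veq; ring.
    - subst ba. assert (0 < (1 - t) * bb) by (apply Rmult_lt_0_compat; lra). lra.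
    - assert (0 < t * ba) by (apply Rmult_lt_0_compat; lra).
      assert (0 <= (1 - t) * bb) by (apply Rmult_le_pos; lra). lra. }
  apply (conv_of_weighted_pair _ r a' b' (t * ba) ((1 - t) * bb));
    try (apply Rmult_le_pos; lra); auto.
  - destruct Ha' as [-> | Ha']; [left; ring | right; auto].
  - destruct Hb' as [-> | Hb']; [left; ring | right; auto].
  - rewrite Ea, Eb in E. apply (f_equal (fun p => (c1 p, c2 p, c3 p))) in E. simpl in E.
    injection E as E1 E2 E3. veq; nra.
Qed.

Lemma emb_inj p q : emb p = emb q -> p = q.
Proof.
  destruct p, q. unfold emb; simpl. intros E. injection E; intros.
  f_equal; apply eq_IZR; auto.
Qed.

Lemma pt_eq_dec (p q : pt) : {p = q} + {p <> q}.
Proof. decide equality; apply Z.eq_dec. Qed.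

Definition remove_pt (V : list pt) (z : pt) : list pt :=
  filter (fun y => if pt_eq_dec y z then false else true) V.

Lemma ptset_remove_pt V z q : ptset (remove_pt V z) q <-> ptset V q /\ q <> emb z.
Proof.
  unfold ptset, remove_pt. split.
  - intros [y [Hin ->]]. apply filter_In in Hin as [Hin Hf].
    destruct (pt_eq_dec y z); try discriminate. split; [exists y; auto |].
    intros E. apply emb_inj in E. auto.
  - intros [[y [Hin ->]] N]. exists y. split; auto. apply filter_In. split; auto.
    destruct (pt_eq_dec y z); auto. subst. contradiction.
Qed.

Lemma length_remove_pt V z : In z V -> (length (remove_pt V z) < length V)%nat.
Proof.
  unfold remove_pt. induction V as [|y V IH]; simpl; [tauto |]. intros Hz.
  pose proof (filter_length_le (fun y => if pt_eq_dec y z then false else true) V).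
  destruct (pt_eq_dec y z); simpl; [lia |].
  destruct Hz as [-> | Hz]; [congruence | specialize (IH Hz); lia].
Qed.

Lemma shortest_generating_list (P : region) V : same_set P (conv (ptset V)) ->
  exists V0, same_set P (conv (ptset V0)) /\
    forall V', same_set P (conv (ptset V')) -> (length V0 <= length V')%nat.
Proof.
  remember (length V) as n. revert V Heqn.
  induction n as [n IH] using (well_founded_induction Wf_nat.lt_wf). intros V Hn HV.
  destruct (classic (exists V', same_set P (conv (ptset V')) /\ (length V' < length V)%nat))
    as [[V' [H1 H2]] | N].
  - apply (IH (length V')) with V'; auto. lia.
  - exists V. split; auto. intros V' H'. apply NNPP. intros X. apply N. exists V'. split; auto. lia.
Qed.

Lemma vertex_same (A B : region) r : same_set A B -> vertex B r -> vertex A r.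
Proof.
  intros H [Hr Hv]. split; [apply H; auto |]. intros a b t Ha Hb. apply Hv; apply H; auto.
Qed.

Lemma shortest_generating_list_vertices (P : region) V0 : same_set P (conv (ptset V0)) ->
  (forall V', same_set P (conv (ptset V')) -> (length V0 <= length V')%nat) ->
  forall z, In z V0 -> vertex P (emb z).
Proof.
  intros HV Hmin z Hz. apply NNPP; intros Nv.
  assert (Hc : conv (fun q => ptset V0 q /\ q <> emb z) (emb z)).
  { apply nonvertex_in_conv_remove.
    - apply subset_conv. exists z; auto.
    - intros X. apply Nv, (vertex_same _ _ _ HV X). }
  assert (Hs : same_set P (conv (ptset (remove_pt V0 z)))).
  { intros q. rewrite (HV q). split.
    - apply conv_min. intros s Hs. destruct (classic (s = emb z)) as [-> | E].
      + revert Hc. apply conv_mono. intros p Hp. apply ptset_remove_pt; auto.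
      + apply subset_conv, ptset_remove_pt; auto.
    - apply conv_mono. intros s Hs. apply ptset_remove_pt in Hs. tauto. }
  specialize (Hmin _ Hs). pose proof (length_remove_pt V0 z Hz). lia.
Qed.

Section LinearFunctional.

Variable f : vec3 -> R.
Hypothesis f_lin : forall a p q, f (vadd (vscale a p) q) = a * f p + f q.
Hypothesis f_zero : f vzero = 0.

Lemma conv_le (S : region) B p : (forall s, S s -> f s <= B) -> conv S p -> f p <= B.
Proof.
  intros HB [l [Hl [Hw <-]]]. rewrite <- (Rmult_1_l B), <- Hw. clear Hw.
  induction l as [|[w s] l IH]; simpl.
  { rewrite f_zero. lra. }
  inversion Hl as [|? ? [Hw' Hs] Hl']; subst; simpl in Hw', Hs.
  rewrite f_lin. specialize (IH Hl'). pose proof (HB s Hs).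
  assert (w * f s <= w * B) by (apply Rmult_le_compat_l; lra). lra.
Qed.

Lemma csum_le_max (S : region) r l :
  (forall s, S s -> s <> r -> f s < f r) ->
  Forall (fun wq => 0 <= fst wq /\ S (snd wq)) l ->
  f (csum l) <= wsum l * f r /\ (f (csum l) = wsum l * f r -> csum l = vscale (wsum l) r).
Proof.
  intros Hmax. induction l as [|[w s] l IH]; intros Hl; simpl.
  { rewrite f_zero. split; [lra | intros _; veq; ring]. }
  inversion Hl as [|? ? [Hw Hs] Hl']; subst; simpl in Hw, Hs.
  destruct (IH Hl') as [Hle Heq]. rewrite f_lin.
  destruct (classic (s = r)) as [-> | Hsr].
  - split; [lra |]. intros E. rewrite Heq by lra. veq; ring.
  - pose proof (Hmax s Hs Hsr).
    assert (w * f s <= w * f r) by (apply Rmult_le_compat_l; lra).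
    split; [lra |]. intros E.
    assert (Hw0 : w = 0).
    { destruct Hw as [Hw | Hw]; auto.
      assert (w * f s < w * f r) by (apply Rmult_lt_compat_l; lra). lra. }
    subst w. rewrite Heq by lra. veq; ring.
Qed.

Lemma vertex_of_strict_max (S : region) r :
  S r -> (forall s, S s -> s <> r -> f s < f r) -> vertex (conv S) r.
Proof.
  intros Hr Hmax. split; [apply subset_conv; auto |].
  assert (Hconv : forall p, conv S p -> f p <= f r /\ (f p = f r -> p = r)).
  { intros p [l [Hl [Hw <-]]]. destruct (csum_le_max S r l Hmax Hl) as [A B].
    rewrite Hw in A, B. split; [lra |]. intros E. rewrite B by lra. veq; ring. }
  intros a b t Ha Hb Ht E.
  destruct (Hconv a Ha) as [A1 A2], (Hconv b Hb) as [B1 B2].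
  assert (Hf : f r = t * f a + (1 - t) * f b).
  { replace (vscale (1 - t) b) with (vadd (vscale (1 - t) b) vzero) in E by (veq; ring).
    rewrite E at 1. rewrite !f_lin, f_zero. ring. }
  assert (t * f a <= t * f r) by (apply Rmult_le_compat_l; lra).
  assert ((1 - t) * f b <= (1 - t) * f r) by (apply Rmult_le_compat_l; lra).
  split; [apply A2; apply (Rmult_eq_reg_l t) | apply B2; apply (Rmult_eq_reg_l (1 - t))]; lra.
Qed.

End LinearFunctional.

(** * Lattice polytopes *)

Lemma conv_abs_le (f : vec3 -> R) (S : region) B p :
  (forall a p q, f (vadd (vscale a p) q) = a * f p + f q) -> f vzero = 0 ->
  (forall s, S s -> Rabs (f s) <= B) -> conv S p -> Rabs (f p) <= B.
Proof.
  intros Hlin H0 HB Hp. apply Rabs_le. split.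
  - enough (- f p <= B) by lra.
    apply (conv_le (fun q => - f q)) with S; auto.
    + intros a q r. rewrite Hlin. ring.
    + rewrite H0. ring.
    + intros s Hs. pose proof (Rle_abs (- f s)). rewrite Rabs_Ropp in *. pose proof (HB s Hs). lra.
  - apply (conv_le f) with S; auto.
    intros s Hs. pose proof (Rle_abs (f s)). pose proof (HB s Hs). lra.
Qed.

Definition coord_bound (V : list pt) : Z :=
  fold_right (fun z acc => Z.abs (z1 z) + Z.abs (z2 z) + Z.abs (z3 z) + acc)%Z 0%Z V.

Lemma coord_bound_spec V z : In z V ->
  (Z.abs (z1 z) <= coord_bound V /\ Z.abs (z2 z) <= coord_bound V /\
   Z.abs (z3 z) <= coord_bound V)%Z.
Proof.
  assert (Hpos : forall W, (0 <= coord_bound W)%Z) by (intros W; induction W; simpl; lia).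
  induction V as [|y V IH]; simpl; [tauto |]. intros [-> | Hz].
  - specialize (Hpos V). lia.
  - specialize (IH Hz). lia.
Qed.

Lemma conv_ptset_bounded V p : conv (ptset V) p ->
  Rabs (c1 p) <= IZR (coord_bound V) /\ Rabs (c2 p) <= IZR (coord_bound V) /\
  Rabs (c3 p) <= IZR (coord_bound V).
Proof.
  intros Hp.
  assert (HV : forall s, ptset V s -> Rabs (c1 s) <= IZR (coord_bound V) /\
    Rabs (c2 s) <= IZR (coord_bound V) /\ Rabs (c3 s) <= IZR (coord_bound V)).
  { intros s [z [Hz ->]]. destruct (coord_bound_spec V z Hz) as [B1 [B2 B3]].
    simpl. rewrite <- !abs_IZR. repeat split; apply IZR_le; auto. }
  repeat split; [apply (conv_abs_le c1) with (ptset V) | apply (conv_abs_le c2) with (ptset V)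
                | apply (conv_abs_le c3) with (ptset V)]; auto; intros; apply HV; auto.
Qed.

Definition zrange (B : Z) : list Z :=
  map (fun n => Z.of_nat n - B)%Z (seq 0 (Z.to_nat (2 * B + 1))).

Lemma In_zrange B k : (Z.abs k <= B)%Z -> In k (zrange B).
Proof.
  intros H. unfold zrange. apply in_map_iff. exists (Z.to_nat (k + B)). split.
  - rewrite Z2Nat.id by lia. lia.
  - apply in_seq. lia.
Qed.

Definition zbox (B : Z) : list pt :=
  flat_map (fun a => flat_map (fun b => map (P3 a b) (zrange B)) (zrange B)) (zrange B).

Lemma In_zbox B z : (Z.abs (z1 z) <= B)%Z -> (Z.abs (z2 z) <= B)%Z -> (Z.abs (z3 z) <= B)%Z ->
  In z (zbox B).
Proof.
  destruct z as [a b c]. simpl. intros A Bb C. unfold zbox.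
  apply in_flat_map. exists a. split; [apply In_zrange; auto |].
  apply in_flat_map. exists b. split; [apply In_zrange; auto |].
  apply in_map_iff. exists c. split; [reflexivity | apply In_zrange; auto].
Qed.

Lemma list_filter_prop (A : pt -> Prop) (l : list pt) :
  exists W, forall z, In z W <-> In z l /\ A z.
Proof.
  induction l as [|y l [W HW]].
  { exists nil. simpl. tauto. }
  destruct (classic (A y)).
  - exists (y :: W). intros z. simpl. rewrite HW.
    split; [intros [<- | E] | intros [[<- | E] F]]; tauto.
  - exists W. intros z. simpl. rewrite HW. split; [tauto |]. intros [[<- | E] F]; tauto.
Qed.

Lemma lattice_polytope_conv (P S : region) V : same_set P (conv (ptset V)) ->
  subset S P -> subset S latt -> lattice_polytope (conv S).
Proof.
  intros HV HSP HSl.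
  destruct (list_filter_prop (fun z => S (emb z)) (zbox (coord_bound V))) as [W HW].
  exists W. apply conv_ext. intros q. split.
  - intros Hq. destruct (HSl q Hq) as [z <-]. exists z. split; auto. apply HW. split; auto.
    destruct (conv_ptset_bounded V _ (proj1 (HV _) (HSP _ Hq))) as [A [B C]].
    simpl in A, B, C. rewrite <- !abs_IZR in A, B, C. apply le_IZR in A, B, C.
    apply In_zbox; auto.
  - intros [z [Hz ->]]. apply HW in Hz. tauto.
Qed.

(** * The lattice [N] and the plane [L] *)

Ltac zcast := repeat rewrite ?plus_IZR, ?minus_IZR, ?mult_IZR, ?opp_IZR.
Ltac zcast_in H := repeat rewrite ?plus_IZR, ?minus_IZR, ?mult_IZR, ?opp_IZR in H.

Lemma pt_ext (p q : pt) : z1 p = z1 q -> z2 p = z2 q -> z3 p = z3 q -> p = q.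
Proof. destruct p, q; simpl; intros; subst; reflexivity. Qed.

Definition zlin (m : Z) (u : pt) (n : Z) (v : pt) : pt := zadd (zscale m u) (zscale n v).

Definition zdot (p q : pt) : Z := (z1 p * z1 q + z2 p * z2 q + z3 p * z3 q)%Z.

Definition zcross (p q : pt) : pt :=
  P3 (z2 p * z3 q - z3 p * z2 q) (z3 p * z1 q - z1 p * z3 q) (z1 p * z2 q - z2 p * z1 q).

Definition zdet3 (p q r : pt) : Z := zdot (zcross p q) r.

Lemma zdet3_zadd p q y z : zdet3 p q (zadd y z) = (zdet3 p q y + zdet3 p q z)%Z.
Proof. unfold zdet3, zdot; simpl; ring. Qed.

Lemma zdet3_zscale p q k y : zdet3 p q (zscale k y) = (k * zdet3 p q y)%Z.
Proof. unfold zdet3, zdot; simpl; ring. Qed.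

Lemma zdet3_zlin p q m n : zdet3 p q (zlin m p n q) = 0%Z.
Proof. unfold zdet3, zdot, zcross; simpl; ring. Qed.

Lemma zdot_self_eq0 p : zdot p p = 0%Z -> p = P3 0 0 0.
Proof.
  destruct p as [a b c]. unfold zdot; simpl. intros E.
  pose proof (Z.square_nonneg a); pose proof (Z.square_nonneg b); pose proof (Z.square_nonneg c).
  assert (Hsq : forall k, (k * k = 0 -> k = 0)%Z) by (intros k Hk; apply Z.mul_eq_0 in Hk; tauto).
  rewrite (Hsq a), (Hsq b), (Hsq c) by lia. reflexivity.
Qed.

Lemma rdet3_emb p q r : rdet3 (emb p) (emb q) (emb r) = IZR (zdet3 p q r).
Proof. unfold rdet3, zdet3, zdot, zcross, emb; simpl. zcast. ring. Qed.

Ltac pt_ring :=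
  apply pt_ext;
  cbn [z1 z2 z3 zadd zscale zlin zopp zcross zapply m11 m12 m13 m21 m22 m23 m31 m32 m33]; ring.

(* Lagrange's identity for the decomposition of [y] along [u], [v] and [u x v]. *)
Lemma lagrange_decomposition u v y :
  zscale (zdot (zcross u v) (zcross u v)) y =
  zadd (zlin (zdot (zcross y v) (zcross u v)) u (zdot (zcross u y) (zcross u v)) v)
       (zscale (zdet3 u v y) (zcross u v)).
Proof. unfold zdet3, zdot, zcross. pt_ring. Qed.

Lemma emb_zlin u v m n :
  emb (zlin m u n v) = vadd (vscale (IZR m) (emb u)) (vscale (IZR n) (emb v)).
Proof. unfold emb, zlin; veq; zcast; ring. Qed.

Section SublatticeBasis.

Variables u v : pt.
Hypothesis Huv : basis_of_sublattice u v.

Lemma zlin_eq_zero a b : zlin a u b v = P3 0 0 0 -> a = 0%Z /\ b = 0%Z.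
Proof.
  intros E. destruct (proj1 Huv (IZR a) (IZR b)) as [Ha Hb].
  - unfold zlin in E; simpl in E. injection E as E1 E2 E3.
    veq; rewrite <- !mult_IZR, <- plus_IZR; [rewrite E1 | rewrite E2 | rewrite E3]; reflexivity.
  - split; apply eq_IZR; auto.
Qed.

Lemma zcross_neq0 : zcross u v <> P3 0 0 0.
Proof.
  intros E. injection E as E1 E2 E3.
  (* (u x v) x u = (u.u) v - (u.v) u *)
  assert (Hrel : zlin (- zdot u v) u (zdot u u) v = P3 0 0 0).
  { apply pt_ext; cbn [z1 z2 z3 zlin zadd zscale]; unfold zdot.
    - transitivity ((z3 u * z1 v - z1 u * z3 v) * z3 u - (z1 u * z2 v - z2 u * z1 v) * z2 u)%Z;
        [ring | rewrite E2, E3; ring].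
    - transitivity ((z1 u * z2 v - z2 u * z1 v) * z1 u - (z2 u * z3 v - z3 u * z2 v) * z3 u)%Z;
        [ring | rewrite E1, E3; ring].
    - transitivity ((z2 u * z3 v - z3 u * z2 v) * z2 u - (z3 u * z1 v - z1 u * z3 v) * z1 u)%Z;
        [ring | rewrite E1, E2; ring]. }
  destruct (zlin_eq_zero _ _ Hrel) as [_ Huu]. apply zdot_self_eq0 in Huu.
  assert (Hu : zlin 1 u 0 v = P3 0 0 0) by (rewrite Huu; reflexivity).
  destruct (zlin_eq_zero _ _ Hu). lia.
Qed.

Lemma basis_divides g a b : g <> 0%Z ->
  (g | z1 (zlin a u b v))%Z -> (g | z2 (zlin a u b v))%Z -> (g | z3 (zlin a u b v))%Z ->
  (g | a)%Z /\ (g | b)%Z.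
Proof.
  intros Hg [k1 E1] [k2 E2] [k3 E3].
  assert (Hgr : IZR g <> 0) by (apply not_0_IZR; auto).
  destruct (proj2 Huv (P3 k1 k2 k3)) as [m [n Hmn]].
  { exists (IZR a / IZR g), (IZR b / IZR g). apply vec3_ext; simpl;
      apply (Rmult_eq_reg_r (IZR g)); auto; rewrite <- mult_IZR;
      [rewrite <- E1 | rewrite <- E2 | rewrite <- E3]; cbn [z1 z2 z3 zlin zadd zscale];
      zcast; field; auto. }
  destruct (zlin_eq_zero (a - g * m) (b - g * n)) as [Ha Hb].
  { injection Hmn as F1 F2 F3. cbn [z1 z2 z3 zlin zadd zscale] in *.
    apply pt_ext; cbn [z1 z2 z3 zlin zadd zscale]; subst; lia. }
  split; [exists m | exists n]; lia.
Qed.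

(* For each coordinate [i], [(i v) u - (i u) v] has coordinates in [{0, +-(u x v)}], so [g]
   divides [i u]; as [u] is primitive in [N ∩ L], [g] divides 1. *)
Lemma zcross_divisor_unit g : g <> 0%Z ->
  (g | z1 (zcross u v))%Z -> (g | z2 (zcross u v))%Z -> (g | z3 (zcross u v))%Z -> (g | 1)%Z.
Proof.
  intros Hg0 G1 G2 G3.
  assert (Hc : forall t, (t = 0 \/ t = z1 (zcross u v) \/ t = - z1 (zcross u v) \/
      t = z2 (zcross u v) \/ t = - z2 (zcross u v) \/
      t = z3 (zcross u v) \/ t = - z3 (zcross u v))%Z -> (g | t)%Z).
  { intros t [-> | Ht]; [apply Z.divide_0_r |].
    destruct Ht as [-> | [-> | [-> | [-> | [-> | ->]]]]];
      try apply (proj2 (Z.divide_opp_r _ _)); auto. }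
  assert (Hu : forall i : pt -> Z, (i = z1 \/ i = z2 \/ i = z3) -> (g | i u)%Z).
  { intros i Hi. apply (proj1 (Z.divide_opp_r _ _)).
    apply (basis_divides g (i v) (- i u)); auto; apply Hc;
      destruct Hi as [-> | [-> | ->]]; cbn [z1 z2 z3 zlin zadd zscale zcross]; lia. }
  apply (basis_divides g 1 0 Hg0); cbn [z1 z2 z3 zlin zadd zscale];
    rewrite Z.mul_1_l, Z.mul_0_l, Z.add_0_r; apply Hu; tauto.
Qed.

Lemma unimodular_completion : exists z, zdet3 u v z = 1%Z.
Proof.
  set (c := zcross u v).
  set (g := Z.gcd (z1 c) (Z.gcd (z2 c) (z3 c))).
  assert (Hg : g = 1%Z).
  { assert (Hg0 : g <> 0%Z).
    { intros E. apply zcross_neq0. fold c.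
      apply Z.gcd_eq_0 in E as [C1 E]. apply Z.gcd_eq_0 in E as [C2 C3].
      destruct c; simpl in *; subst; reflexivity. }
    assert (Hg1 : (g | 1)%Z).
    { apply zcross_divisor_unit; auto; fold c.
      - apply Z.gcd_divide_l.
      - eapply Z.divide_trans; [apply Z.gcd_divide_r | apply Z.gcd_divide_l].
      - eapply Z.divide_trans; [apply Z.gcd_divide_r | apply Z.gcd_divide_r]. }
    apply Z.divide_1_r in Hg1. pose proof (Z.gcd_nonneg (z1 c) (Z.gcd (z2 c) (z3 c))).
    unfold g in *. lia. }
  destruct (Zis_gcd_bezout _ _ _ (Zgcd_is_gcd (z1 c) (Z.gcd (z2 c) (z3 c)))) as [k1 k E].
  destruct (Zis_gcd_bezout _ _ _ (Zgcd_is_gcd (z2 c) (z3 c))) as [k2 k3 E'].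
  exists (P3 k1 (k * k2) (k * k3)). unfold zdet3, zdot. fold c. simpl.
  fold g in E. rewrite Hg, <- E' in E. rewrite <- E. unfold c, zcross; simpl. ring.
Qed.

Lemma zdet3_eq0_in_span y : zdet3 u v y = 0%Z -> exists m n, y = zlin m u n v.
Proof.
  intros Hy. apply (proj2 Huv).
  pose proof (lagrange_decomposition u v y) as Hid. rewrite Hy in Hid.
  set (c := zcross u v) in *. set (N := zdot c c) in *.
  assert (HN : IZR N <> 0).
  { apply not_0_IZR. intros E. apply zcross_neq0, zdot_self_eq0, E. }
  exists (IZR (zdot (zcross y v) c) / IZR N), (IZR (zdot (zcross u y) c) / IZR N).
  apply (f_equal emb) in Hid. unfold emb, zlin in Hid. simpl in Hid.
  injection Hid as E1 E2 E3. zcast_in E1. zcast_in E2. zcast_in E3.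
  unfold emb. veq; apply (Rmult_eq_reg_l (IZR N)); auto;
    [rewrite E1 | rewrite E2 | rewrite E3]; field; auto.
Qed.

Lemma basis_coords z y : zdet3 u v z = 1%Z ->
  exists m n, y = zadd (zlin m u n v) (zscale (zdet3 u v y) z).
Proof.
  intros Hz. destruct (zdet3_eq0_in_span (zadd y (zscale (- zdet3 u v y) z))) as [m [n E]].
  { rewrite zdet3_zadd, zdet3_zscale, Hz. ring. }
  exists m, n. rewrite <- E. pt_ring.
Qed.

End SublatticeBasis.

(** * Minimal Fano polytopes containing [T], [x] and [-x] *)

Definition tri_vertex (u v : pt) : pt := zadd (zscale (-2) u) (zopp v).

Lemma IZR_relation5 (m1 m2 m3 m4 m5 x1 x2 x3 x4 x5 : Z) :
  (m1 * x1 + m2 * x2 + m3 * x3 + m4 * x4 + m5 * x5 = 0)%Z ->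
  IZR m1 * IZR x1 + IZR m2 * IZR x2 + IZR m3 * IZR x3 + IZR m4 * IZR x4 + IZR m5 * IZR x5 = 0.
Proof. intros H. rewrite <- !mult_IZR, <- !plus_IZR, H. reflexivity. Qed.

Lemma interior_conv_tri_pm (S : region) u v a b : basis_of_sublattice u v ->
  (0 < zdet3 u v a)%Z -> (zdet3 u v b < 0)%Z ->
  S (emb u) -> S (emb v) -> S (emb (tri_vertex u v)) -> S (emb a) -> S (emb b) ->
  interior (conv S) vzero.
Proof.
  intros Huv Ha Hb Su Sv Sw Sa Sb.
  destruct (zdet3_eq0_in_span u v Huv
              (zadd (zscale (- zdet3 u v b) a) (zscale (zdet3 u v a) b))) as [al [be E]].
  { rewrite zdet3_zadd, !zdet3_zscale. ring. }
  (* [h(a) b - h(b) a] has height 0, so it is [al u + be v]; adding [K (2u + v + w) = 0] makes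
     all five coefficients positive. *)
  set (K := (1 + Z.abs al + Z.abs be)%Z).
  apply (interior_conv_of_positive_relation S (emb u) (emb v) (emb a) (emb b) (emb (tri_vertex u v))
           (IZR (2 * K - al)) (IZR (K - be)) (IZR (- zdet3 u v b)) (IZR (zdet3 u v a)) (IZR K));
    auto; try (apply IZR_lt; unfold K; lia);
    try (cbn [c1 c2 c3 emb]; apply IZR_relation5;
         apply (f_equal (fun p => (z1 p, z2 p, z3 p))) in E; simpl in E; injection E as E1 E2 E3;
         unfold tri_vertex, zopp; cbn [z1 z2 z3 zadd zscale]; unfold K; lia).
  rewrite rdet3_emb. apply not_0_IZR. lia.
Qed.

Lemma fano_conv_remove (P : region) r u v a b : basis_of_sublattice u v -> fano P ->
  (0 < zdet3 u v a)%Z -> (zdet3 u v b < 0)%Z ->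
  (forall y, In y (u :: v :: tri_vertex u v :: a :: b :: nil) -> P (emb y) /\ emb y <> r) ->
  fano (conv (fun q => P q /\ latt q /\ q <> r)).
Proof.
  intros Huv [[V HV] [_ [_ HP0]]] Ha Hb Hin.
  set (F := fun q => P q /\ latt q /\ q <> r).
  assert (HF : forall y, In y (u :: v :: tri_vertex u v :: a :: b :: nil) -> F (emb y)).
  { intros y Hy. destruct (Hin y Hy). repeat split; auto. exists y; auto. }
  assert (Hint : interior (conv F) vzero).
  { apply (interior_conv_tri_pm F u v a b); auto; apply HF; simpl; tauto. }
  assert (HFP : subset (conv F) P).
  { intros q Hq. apply HV. revert Hq. apply conv_min. intros s Hs. apply HV, Hs. }
  repeat split.
  - apply (lattice_polytope_conv P F V); auto; intros q Hq; apply Hq.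
  - exists vzero; auto.
  - auto.
  - intros p Hl [e [He Hi]]. apply HP0; auto. exists e. split; auto.
Qed.

Lemma ptset_In (l : list pt) y : In y l -> ptset l (emb y).
Proof. intros H. exists y. auto. Qed.

Definition tri_pm (u v x : pt) : list pt := u :: v :: tri_vertex u v :: x :: zopp x :: nil.

Definition zcoord (u v z : pt) (m n k : Z) : pt := zadd (zlin m u n v) (zscale k z).

(* Weights [L/D] on [x, -x, u, v, -u], where [-u = (v + w)/2] and the slack goes to
   [(x + -x)/2 = 0]. *)
Lemma conv_tri_pm_zcoord u v z a b D m n k (Lx Lm Lu Lv Ln : Z) :
  (0 < D)%Z -> (0 <= Lx)%Z -> (0 <= Lm)%Z -> (0 <= Lu)%Z -> (0 <= Lv)%Z -> (0 <= Ln)%Z ->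
  (Lx + Lm + Lu + Lv + Ln <= D)%Z ->
  (D * m = (Lx - Lm) * a + Lu - Ln)%Z -> (D * n = (Lx - Lm) * b + Lv)%Z -> k = (Lx - Lm)%Z ->
  conv (ptset (tri_pm u v (zcoord u v z a b D))) (emb (zcoord u v z m n k)).
Proof.
  intros HD H1 H2 H3 H4 H5 Hsum Hm Hn ->.
  assert (Hpos : forall L, (0 <= L)%Z -> 0 <= IZR L) by (intros; apply IZR_le; auto).
  pose proof (Hpos _ H1); pose proof (Hpos _ H2); pose proof (Hpos _ H3);
    pose proof (Hpos _ H4); pose proof (Hpos _ H5).
  apply IZR_lt in HD. apply IZR_le in Hsum. zcast_in Hsum.
  apply (f_equal IZR) in Hm, Hn. zcast_in Hm. zcast_in Hn.
  assert (Hm' : IZR m = ((IZR Lx - IZR Lm) * IZR a + IZR Lu - IZR Ln) / IZR D)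
    by (rewrite <- Hm; field; lra).
  assert (Hn' : IZR n = ((IZR Lx - IZR Lm) * IZR b + IZR Lv) / IZR D)
    by (rewrite <- Hn; field; lra).
  set (L0 := IZR D - (IZR Lx + IZR Lm + IZR Lu + IZR Lv + IZR Ln)).
  apply (conv_comb5 _ (emb u) (emb v) (emb (tri_vertex u v)) (emb (zcoord u v z a b D))
           (emb (zopp (zcoord u v z a b D)))
           (IZR Lu / IZR D) ((IZR Lv + IZR Ln / 2) / IZR D) (IZR Ln / 2 / IZR D)
           ((IZR Lx + L0 / 2) / IZR D) ((IZR Lm + L0 / 2) / IZR D));
    try (apply ptset_In; simpl; tauto);
    try (apply Rmult_le_pos; [unfold L0; lra | left; apply Rinv_0_lt_compat; lra]).
  { unfold L0. field. lra. }
  all: unfold emb, zcoord, tri_vertex, zopp, zlin; cbn [c1 c2 c3 z1 z2 z3 zadd zscale]; zcast;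
    rewrite Hm', Hn'; field; lra.
Qed.

Lemma tri_pm_height_classification u v z a b D :
  (0 <= a < D)%Z -> (0 <= b < D)%Z ->
  (forall m n k, conv (ptset (tri_pm u v (zcoord u v z a b D))) (emb (zcoord u v z m n k)) ->
     ~ (0 < Z.abs k < D)%Z) ->
  D = 1%Z \/ (D = 2 /\ a = 1 /\ b = 1)%Z.
Proof.
  intros Ha Hb Hforb.
  assert (Hpt : forall m n k Lx Lm Lu Lv Ln, (0 < Z.abs k < D)%Z ->
    (0 <= Lx)%Z -> (0 <= Lm)%Z -> (0 <= Lu)%Z -> (0 <= Lv)%Z -> (0 <= Ln)%Z ->
    (Lx + Lm + Lu + Lv + Ln <= D)%Z ->
    (D * m = (Lx - Lm) * a + Lu - Ln)%Z -> (D * n = (Lx - Lm) * b + Lv)%Z -> k = (Lx - Lm)%Z ->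
    False).
  { intros m n k Lx Lm Lu Lv Ln Hk. intros.
    apply (Hforb m n k); auto. apply (conv_tri_pm_zcoord u v z a b D m n k Lx Lm Lu Lv Ln); lia. }
  (* Each excluded case exhibits a lattice point of height [-1], [1] or [2]. *)
  destruct (Z.eq_dec D 1) as [| HD1]; [left; auto |].
  destruct (Z_lt_ge_dec (a + b) D).
  { exfalso. apply (Hpt 0 0 (-1) 0 1 a b 0)%Z; lia. }
  destruct (Z.eq_dec (a + b) D); [| exfalso; apply (Hpt 1 1 1 1 0 (D - a) (D - b) 0)%Z; lia].
  destruct (Z_lt_ge_dec (2 * a) D).
  { exfalso. apply (Hpt 0 1 1 1 0 0 a a)%Z; lia. }
  destruct (Z.eq_dec (2 * a) D); [| exfalso; apply (Hpt (-1) 0 (-1) 0 1 0 (D - a) (D - a))%Z; lia].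
  destruct (Z.eq_dec D 2); [right; lia |].
  exfalso. apply (Hpt 1 1 2 2 0 0 0 0)%Z; lia.
Qed.

Lemma zdet3_zopp p q y : zdet3 p q (zopp y) = (- zdet3 p q y)%Z.
Proof. unfold zdet3, zdot, zopp; cbn [z1 z2 z3 zscale]; ring. Qed.

Lemma zdet3_l p q : zdet3 p q p = 0%Z.
Proof. unfold zdet3, zdot, zcross; cbn [z1 z2 z3]; ring. Qed.

Lemma zdet3_r p q : zdet3 p q q = 0%Z.
Proof. unfold zdet3, zdot, zcross; cbn [z1 z2 z3]; ring. Qed.

Lemma zdet3_tri_vertex p q : zdet3 p q (tri_vertex p q) = 0%Z.
Proof. unfold zdet3, zdot, zcross, tri_vertex, zopp; cbn [z1 z2 z3 zadd zscale]; ring. Qed.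

Lemma emb_neq_of_zdet3 u v p q : zdet3 u v p <> zdet3 u v q -> emb p <> emb q.
Proof. intros H E. apply emb_inj in E. subst. auto. Qed.

Section MinimalFanoThroughTriangle.

Variables (u v x : pt) (P : region).
Hypothesis Huv : basis_of_sublattice u v.
Hypothesis HP : minimal_fano P.
Hypothesis HPtri : forall y, In y (tri_pm u v x) -> P (emb y).
Hypothesis Hx : (0 < zdet3 u v x)%Z.

Lemma fano_hull_tri_pm : same_set P (conv (ptset (tri_pm u v x))).
Proof.
  pose proof HP as [[[V HV] _] Hmin].
  assert (HPconv : subset (conv P) P).
  { intros q Hq. apply HV. revert Hq. apply conv_min. intros s Hs. apply HV, Hs. }
  destruct (shortest_generating_list P V HV) as [V0 [HV0 Hshort]].
  intros q. split.
  - intros Hq. apply HV0 in Hq. revert Hq. apply conv_mono. intros s [y [Hy ->]].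
    apply NNPP. intros Hout.
    apply (Hmin (emb y) (shortest_generating_list_vertices P V0 HV0 Hshort y Hy)).
    apply (fano_conv_remove P (emb y) u v x (zopp x)); [auto | apply HP | auto | |].
    { rewrite zdet3_zopp. lia. }
    intros t Ht. split; [apply HPtri; auto |]. intros E. apply Hout. rewrite <- E.
    apply ptset_In; auto.
  - intros Hq. apply HPconv. revert Hq. apply conv_mono. intros s [y [Hy ->]]. apply HPtri, Hy.
Qed.

Lemma tri_pm_vertex y : y = x \/ y = zopp x -> vertex P (emb y).
Proof.
  intros Hy. apply (vertex_same _ _ _ fano_hull_tri_pm).
  apply (vertex_of_strict_max (fun s => IZR (zdet3 u v y) * rdet3 (emb u) (emb v) s)).
  - intros a p q. unfold rdet3; simpl. ring.
  - unfold rdet3; simpl. ring.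
  - apply ptset_In. destruct Hy as [-> | ->]; simpl; tauto.
  - intros s [t [Ht ->]] Hne. rewrite !rdet3_emb, <- !mult_IZR. apply IZR_lt.
    assert (t <> y) by (intros ->; auto).
    unfold tri_pm in Ht; simpl in Ht.
    destruct Ht as [<- | [<- | [<- | [<- | [<- | []]]]]];
      rewrite ?zdet3_l, ?zdet3_r, ?zdet3_tri_vertex;
      destruct Hy as [-> | ->]; rewrite ?zdet3_zopp; try congruence; nia.
Qed.

Lemma fano_conv_remove_of_heights r a b : zdet3 u v r <> 0%Z ->
  P (emb a) -> P (emb b) -> zdet3 u v a <> zdet3 u v r -> zdet3 u v b <> zdet3 u v r ->
  (0 < zdet3 u v a)%Z -> (zdet3 u v b < 0)%Z ->
  fano (conv (fun q => P q /\ latt q /\ q <> emb r)).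
Proof.
  intros Hr Pa Pb Ha Hb Ha0 Hb0. apply (fano_conv_remove P (emb r) u v a b); auto; [apply HP |].
  intros t Ht. simpl in Ht.
  destruct Ht as [<- | [<- | [<- | [<- | [<- | []]]]]];
    (split; [auto; apply HPtri; simpl; tauto | apply (emb_neq_of_zdet3 u v)]);
    rewrite ?zdet3_l, ?zdet3_r, ?zdet3_tri_vertex; auto.
Qed.

Lemma no_lattice_point_of_lower_height p : P (emb p) -> ~ (0 < Z.abs (zdet3 u v p) < zdet3 u v x)%Z.
Proof.
  intros Pp Hp. destruct (Z_lt_ge_dec 0 (zdet3 u v p)).
  - apply (proj2 HP (emb x) (tri_pm_vertex x (or_introl eq_refl))).
    apply (fano_conv_remove_of_heights x p (zopp x)); rewrite ?zdet3_zopp; auto; try lia.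
    apply HPtri. simpl. tauto.
  - apply (proj2 HP (emb (zopp x)) (tri_pm_vertex (zopp x) (or_intror eq_refl))).
    apply (fano_conv_remove_of_heights (zopp x) x p); rewrite ?zdet3_zopp; auto; try lia.
    apply HPtri. simpl. tauto.
Qed.

End MinimalFanoThroughTriangle.

Lemma zdet3_zcoord u v z m n k : zdet3 u v (zcoord u v z m n k) = (k * zdet3 u v z)%Z.
Proof. unfold zcoord. rewrite zdet3_zadd, zdet3_zscale, zdet3_zlin. ring. Qed.

Lemma zcoord_reduce u v z a b D : (0 < D)%Z ->
  zcoord u v z a b D = zcoord u v (zadd z (zlin (a / D) u (b / D) v)) (a mod D) (b mod D) D.
Proof.
  intros HD. pose proof (Z.div_mod a D ltac:(lia)). pose proof (Z.div_mod b D ltac:(lia)).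
  apply pt_ext; cbn [zcoord z1 z2 z3 zadd zscale zlin]; nia.
Qed.

Definition zmat_cols (p q r : pt) : zmat :=
  ZM (z1 p) (z1 q) (z1 r) (z2 p) (z2 q) (z2 r) (z3 p) (z3 q) (z3 r).

Lemma zdet_zmat_cols p q r : zdet (zmat_cols p q r) = zdet3 p q r.
Proof. unfold zdet, zdet3, zdot, zcross; simpl. ring. Qed.

Lemma zapply_zmat_cols p q r a b c : zapply (zmat_cols p q r) (P3 a b c) = zcoord p q r a b c.
Proof. unfold zcoord, zmat_cols. pt_ring. Qed.

Lemma conv_ptset_same L1 L2 : (forall z, In z L1 <-> In z L2) ->
  same_set (conv (ptset L1)) (conv (ptset L2)).
Proof.
  intros H. apply conv_ext. intros q.
  split; intros [z [Hz ->]]; exists z; split; auto; apply H; auto.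
Qed.

Lemma tri_pm_cols1 u v x :
  same_set (conv (ptset (tri_pm u v x))) (conv (ptset (map (zapply (zmat_cols u v x)) cols1))).
Proof.
  apply conv_ptset_same. intros y. unfold cols1. cbn [map]. rewrite !zapply_zmat_cols.
  replace (zcoord u v x 1 0 0) with u by (unfold zcoord; pt_ring).
  replace (zcoord u v x 0 1 0) with v by (unfold zcoord; pt_ring).
  replace (zcoord u v x 0 0 1) with x by (unfold zcoord; pt_ring).
  replace (zcoord u v x 0 0 (-1)) with (zopp x) by (unfold zcoord; pt_ring).
  replace (zcoord u v x (-2) (-1) 0) with (tri_vertex u v) by (unfold zcoord, tri_vertex; pt_ring).
  unfold tri_pm. simpl. tauto.
Qed.

Lemma tri_pm_cols2 u v z :
  same_set (conv (ptset (tri_pm u v (zcoord u v z 1 1 2))))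
           (conv (ptset (map (zapply (zmat_cols u v z)) cols2))).
Proof.
  apply conv_ptset_same. intros y. unfold cols2. cbn [map]. rewrite !zapply_zmat_cols.
  replace (zcoord u v z 1 0 0) with u by (unfold zcoord; pt_ring).
  replace (zcoord u v z 0 1 0) with v by (unfold zcoord; pt_ring).
  replace (zcoord u v z (-2) (-1) 0) with (tri_vertex u v) by (unfold zcoord, tri_vertex; pt_ring).
  replace (zcoord u v z (-1) (-1) (-2)) with (zopp (zcoord u v z 1 1 2))
    by (unfold zcoord; pt_ring).
  unfold tri_pm. simpl. tauto.
Qed.

Lemma minimal_fano_tri_pm_normal_form (u v x : pt) (P : region) :
  basis_of_sublattice u v -> (0 < zdet3 u v x)%Z -> minimal_fano P ->
  (forall y, In y (tri_pm u v x) -> P (emb y)) ->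
  exists A : zmat, in_GL3Z A /\
    (same_set P (conv (ptset (map (zapply A) cols1))) \/
     same_set P (conv (ptset (map (zapply A) cols2)))).
Proof.
  intros Huv Hx HP HPtri.
  pose proof (fano_hull_tri_pm u v x P Huv HP HPtri Hx) as Hhull.
  destruct (unimodular_completion u v Huv) as [z0 Hz0].
  destruct (basis_coords u v Huv z0 x Hz0) as [a0 [b0 Ex]].
  remember (zdet3 u v x) as D eqn:HD.
  change (zadd (zlin a0 u b0 v) (zscale D z0)) with (zcoord u v z0 a0 b0 D) in Ex.
  rewrite zcoord_reduce in Ex by lia.
  set (z := zadd z0 (zlin (a0 / D) u (b0 / D) v)) in Ex.
  assert (Hz : zdet3 u v z = 1%Z) by (unfold z; rewrite zdet3_zadd, zdet3_zlin; lia).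
  assert (Hclass : D = 1%Z \/ (D = 2 /\ a0 mod D = 1 /\ b0 mod D = 1)%Z).
  { apply (tri_pm_height_classification u v z); try (apply Z.mod_pos_bound; lia).
    intros m n k Hk. rewrite <- Ex in Hk. apply Hhull in Hk.
    pose proof (no_lattice_point_of_lower_height u v x P Huv HP HPtri ltac:(lia) _ Hk) as H.
    rewrite zdet3_zcoord, Hz, Z.mul_1_r, <- HD in H. exact H. }
  destruct Hclass as [HD1 | [HD2 [Ha Hb]]].
  - exists (zmat_cols u v x). split; [unfold in_GL3Z; left; rewrite zdet_zmat_cols; congruence |].
    left. intros q. rewrite (Hhull q). apply tri_pm_cols1.
  - exists (zmat_cols u v z). split; [unfold in_GL3Z; left; rewrite zdet_zmat_cols; auto |].
    right. intros q. rewrite (Hhull q), Ex, Ha, Hb, HD2. apply tri_pm_cols2.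
Qed.

Theorem lemma4p10 (u v x : pt) (P : region) :
  basis_of_sublattice u v ->
  ~ inspan (emb u) (emb v) (emb x) ->
  minimal_fano P ->
  subset (conv (ptset (u :: v :: zadd (zscale (-2) u) (zopp v) :: nil))) P ->
  P (emb x) -> P (emb (zopp x)) ->
  exists A : zmat, in_GL3Z A /\
    (same_set P (conv (ptset (map (zapply A) cols1))) \/
     same_set P (conv (ptset (map (zapply A) cols2)))).
Proof.
  intros Huv Hx HP HT Px Pmx.
  assert (HPtri : forall y, In y (tri_pm u v x) -> P (emb y)).
  { intros y Hy. destruct Hy as [<- | [<- | [<- | Hy]]];
      [apply HT, subset_conv, ptset_In; simpl; tauto ..|].
    destruct Hy as [<- | [<- | []]]; auto. }
  destruct (Z.lt_trichotomy (zdet3 u v x) 0) as [Hneg | [H0 | Hpos]].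
  - apply (minimal_fano_tri_pm_normal_form u v (zopp x) P); auto.
    + rewrite zdet3_zopp. lia.
    + intros y Hy. apply HPtri. revert Hy. unfold tri_pm.
      replace (zopp (zopp x)) with x by pt_ring. simpl. tauto.
  - exfalso. apply Hx. destruct (zdet3_eq0_in_span u v Huv x H0) as [m [n ->]].
    exists (IZR m), (IZR n). apply emb_zlin.
  - apply (minimal_fano_tri_pm_normal_form u v x P); auto.
Qed.
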